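(* Let $A$ be an $n\times n$ generalized tournament matrix. If there exists $\alpha>1/2$ such that for every clan $I$ of $A$ with $|I|\geq 2$ the principal submatrix $A[I]$ is $\alpha$-separable, then $A$ is $\alpha$-linear.
   Context: A generalized tournament matrix of order $n$ is a real $n\times n$ matrix $M=(m_{ij})$ with nonnegative entries satisfying $M+M^{t}=J_n-I_n$. Write $[n]=\{1,\ldots,n\}$. A clan of $M$ is a subset $X\subseteq[n]$ such that for all $i,j\in X$ and $k\in[n]\setminus X$, $m_{ik}=m_{jk}$ and $m_{ki}=m_{kj}$. For $\alpha>1/2$, a matrix $M$ indexed by a set $V$ (such as a principal submatrix $A[I]$ indexed by $I$) is $\alpha$-separable if $V$ can be partitioned into two nonempty sets $X,Y$ with $m_{xy}=\alpha$ for all $x\in X,y\in Y$; $M$ is $\alpha$-linear if there is an ordering $x_1,\ldots,x_n$ of $[n]$ with $m_{x_ix_j}=\alpha$ whenever $i<j$. *)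

From mathcomp Require Import all_boot all_order all_algebra all_fingroup.
Set Implicit Arguments. Unset Strict Implicit. Unset Printing Implicit Defensive.
Import Order.TTheory GRing.Theory Num.Theory.
Local Open Scope ring_scope.

(* Indices [n] = {1..n} are represented by 'I_n = {0..n-1}. *)

Definition gen_tournament {R : realFieldType} {n : nat} (M : 'M[R]_n) : Prop :=
  (forall i j, 0 <= M i j) /\ M + M^T = const_mx 1 - 1%:M.

Definition clan {R : realFieldType} {n : nat} (M : 'M[R]_n) (X : {set 'I_n}) : Prop :=
  forall i j k, i \in X -> j \in X -> k \notin X ->
    M i k = M j k /\ M k i = M k j.

Definition alpha_separable {R : realFieldType} {n : nat} (M : 'M[R]_n)
    (alpha : R) (I : {set 'I_n}) : Prop :=
  exists X Y : {set 'I_n},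
    [/\ X :|: Y = I, X :&: Y = set0, X != set0, Y != set0 &
        forall x y, x \in X -> y \in Y -> M x y = alpha].

Definition alpha_linear {R : realFieldType} {n : nat} (M : 'M[R]_n) (alpha : R) : Prop :=
  exists s : 'S_n, forall i j : 'I_n, (i < j)%N -> M (s i) (s j) = alpha.

From mathcomp Require Import all_boot all_order all_algebra all_fingroup.
From mathcomp Require Import zify.
Set Implicit Arguments. Unset Strict Implicit. Unset Printing Implicit Defensive.
Import Order.TTheory GRing.Theory Num.Theory.
Local Open Scope ring_scope.

(* If a clan I splits as X, Y with a_xy = alpha across, then X and Y are again
   clans: a vertex of Y sees every x in X through the entries alpha and
   1 - alpha, and a vertex outside I cannot tell members of I apart. By
   induction on |I| every clan, in particular [n] itself, is listed by a
   sequence whose forward entries all equal alpha. *)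

Section ClanSplit.

Variables (R : realFieldType) (n : nat) (A : 'M[R]_n).
Hypothesis tourA : gen_tournament A.

Lemma gen_tournament_entryC i k : i != k -> A k i = 1 - A i k.
Proof.
move=> nik; have := congr1 (fun M : 'M[R]_n => M i k) tourA.2.
by rewrite !mxE (negbTE nik) mulr0n subr0 => <-; rewrite addrAC subrr add0r.
Qed.

Lemma clan_splitl (c : R) (I X Y : {set 'I_n}) :
  clan A I -> X :|: Y = I -> (forall x y, x \in X -> y \in Y -> A x y = c) ->
  clan A X.
Proof.
move=> clanI defI cXY i j k iX jX kX.
have [kY | kY] := boolP (k \in Y).
  have neq_k l : l \in X -> l != k by apply: contraTneq => ->.
  rewrite (gen_tournament_entryC (neq_k i iX)).
  by rewrite (gen_tournament_entryC (neq_k j jX)) !cXY.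
by apply: clanI; rewrite -defI ?inE ?iX ?jX // negb_or kX.
Qed.

Lemma clan_splitr (c : R) (I X Y : {set 'I_n}) :
  clan A I -> X :|: Y = I -> X :&: Y = set0 ->
  (forall x y, x \in X -> y \in Y -> A x y = c) -> clan A Y.
Proof.
move=> clanI defI disjXY cXY; apply: (@clan_splitl (1 - c) I Y X) => //.
  by rewrite setUC.
move=> y x yY xX; have neq_xy : x != y.
  apply: contra_eqN disjXY => /eqP eq_xy; apply/set0Pn; exists x.
  by rewrite inE xX eq_xy yY.
by rewrite (gen_tournament_entryC neq_xy) cXY.
Qed.

Variable alpha : R.
Hypothesis sepA : forall I : {set 'I_n}, clan A I -> (2 <= #|I|)%N ->
  alpha_separable A alpha I.

Lemma clan_alpha_chain (I : {set 'I_n}) : clan A I ->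
  exists s : seq 'I_n,
    [/\ uniq s, s =i I & pairwise (fun x y => A x y == alpha) s].
Proof.
have [m] := ubnP #|I|; elim: m I => // m IH I; rewrite ltnS => leIm clanI.
have [small | two_le] := ltnP #|I| 2.
  exists (enum I); split; [exact: enum_uniq | exact: mem_enum |].
  by move: small; rewrite cardE; case: (enum I) => [|? []].
have [X [Y [defI disjXY nX nY cXY]]] := sepA clanI two_le.
have cardXY : (#|X| + #|Y|)%N = #|I| by rewrite -defI cardsU disjXY cards0 subn0.
move: nX nY; rewrite -!card_gt0 => X_gt0 Y_gt0.
have ltXm : (#|X| < m)%N by lia.
have ltYm : (#|Y| < m)%N by lia.
have [sX [uniqX memX pwX]] := IH X ltXm (clan_splitl clanI defI cXY).
have [sY [uniqY memY pwY]] := IH Y ltYm (clan_splitr clanI defI disjXY cXY).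
exists (sX ++ sY); split.
- rewrite cat_uniq uniqX uniqY andbT; apply/hasPn => z; rewrite memY memX => zY.
  apply/negP => zX; have : z \in X :&: Y by rewrite inE zX zY.
  by rewrite disjXY inE.
- by move=> z; rewrite mem_cat memX memY -defI inE.
- rewrite pairwise_cat pwX pwY !andbT; apply/allrelP => u v.
  by rewrite memX memY => uX vY; rewrite cXY.
Qed.

End ClanSplit.

Lemma clan_setT (R : realFieldType) (n : nat) (A : 'M[R]_n) : clan A [set: 'I_n].
Proof. by move=> i j k _ _; rewrite inE. Qed.

Lemma pairwise_ord_perm (n : nat) (r : rel 'I_n) (s : seq 'I_n) :
  perm_eq s (enum 'I_n) -> pairwise r s ->
  exists σ : 'S_n, forall i j : 'I_n, (i < j)%N -> r (σ i) (σ j).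
Proof.
move=> perm_s pw_s; have size_s : size s == n.
  by rewrite (perm_size perm_s) size_enum_ord.
pose t := Tuple size_s.
have /tuple_uniqP inj_t : uniq t by rewrite (perm_uniq perm_s) enum_uniq.
exists (perm inj_t) => i j lt_ij; rewrite !permE !(tnth_nth i) /=.
by apply/pairwiseP => //; rewrite inE (eqP size_s).
Qed.

Theorem lemma5p7 (R : realFieldType) (n : nat) (A : 'M[R]_n) (alpha : R) :
  gen_tournament A -> 1 / 2 < alpha ->
  (forall I : {set 'I_n}, clan A I -> (2 <= #|I|)%N -> alpha_separable A alpha I) ->
  alpha_linear A alpha.
Proof.
move=> tourA _ sepA.
have [s [uniq_s mem_s pw_s]] := clan_alpha_chain tourA sepA (clan_setT A).
have perm_s : perm_eq s (enum 'I_n).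
  by apply: uniq_perm; rewrite ?enum_uniq // => x; rewrite mem_s inE mem_enum.
have [σ σ_chain] := pairwise_ord_perm perm_s pw_s.
by exists σ => i j /σ_chain/eqP.
Qed.
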